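(* Let $n=n_1+\dots+n_k=p+q$ with positive integers, let $G=U(n)$, let $L=U(n_1)\times\cdots\times U(n_k)$ and $H=U(p)\times U(q)$ be the natural block-diagonal subgroups of $G$, and let $G'=O(n)$. If $\min(p,q)\ge 3$ and $k\ge 4$, then $LG'H\subsetneq G$.
   Context: $LG'H=\{xyz:x\in L,y\in G',z\in H\}$. *)

From HB Require Import structures.
From mathcomp Require Import all_boot all_order all_algebra.
From mathcomp Require Import complex.
From mathcomp Require Import Rstruct.
Set Implicit Arguments. Unset Strict Implicit. Unset Printing Implicit Defensive.
Import Order.TTheory GRing.Theory Num.Theory.
Local Open Scope ring_scope.

Definition CC := complex Rdefinitions.R.

Definition adjmx n (A : 'M[CC]_n) : 'M[CC]_n := (map_mx Num.conj A)^T.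

Definition unitary_mx n (A : 'M[CC]_n) : Prop := A *m adjmx A = 1%:M.

Definition orthogonal_mx n (A : 'M[CC]_n) : Prop :=
  unitary_mx A /\ (forall i j, A i j \is Num.real).

(* blk ns i = index of the block (of sizes ns = [n_1; ...; n_k]) containing
   the (0-based) index i. *)
Fixpoint blk (ns : seq nat) (i : nat) : nat :=
  match ns with
  | [::] => 0
  | m :: ns' => if (i < m)%N then 0 else (blk ns' (i - m)).+1
  end.

Definition block_unitary (ns : seq nat) n (A : 'M[CC]_n) : Prop :=
  unitary_mx A /\
  (forall i j : 'I_n, blk ns i != blk ns j -> A i j = 0).

From HB Require Import structures.
From mathcomp Require Import all_boot all_algebra all_fingroup.
From mathcomp Require Import complex Rstruct.
From mathcomp Require Import ring lra zify.

(* Let P_t project onto the coordinates of the t-th block of L, and put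
   tau X = tr (P_0 X P_1 X P_2 X P_0).  Elements of L commute with every P_t,
   so conjugation by them preserves tau.  If g = l o h lies in L G' H and P
   projects onto the first p coordinates, then h commutes with P, so
   X = g P g^* equals l (o P o^T) l^* and tau X = tau (o P o^T) is real.
   Conversely, put a 4 x 4 unitary U on one coordinate from each of the first
   four blocks, then permute coordinates so that the first two of these land
   among the first p and the other two among the last q.  For the resulting g
   in U(n), tau X = Q_01 Q_12 Q_20 where Q projects onto the span of the first
   two columns of U, and this is not real for the U chosen below.  Only
   min(p, q) >= 2 is needed. *)

Set Implicit Arguments.
Unset Strict Implicit.
Unset Printing Implicit Defensive.

Import GRing.Theory Num.Theory.
Local Open Scope ring_scope.
Local Open Scope sesquilinear_scope.

Lemma trmxC_mul {C : numClosedFieldType} m n p (A : 'M[C]_(m, n)) (B : 'M_(n, p)) :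
  (A *m B)^t* = B^t* *m A^t*.
Proof. by rewrite trmx_mul map_mxM. Qed.

Lemma unitary_mxE n (A : 'M[CC]_n) : unitary_mx A <-> A \is unitarymx.
Proof. by rewrite /unitary_mx /adjmx map_trmx; split=> /unitarymxP. Qed.

Lemma realmx_orthogonal n (A : 'M[CC]_n) : orthogonal_mx A -> A \is a realmx.
Proof. by case=> _ Areal; apply/mxOverP. Qed.

Lemma perm_mx_trC (C : numClosedFieldType) n (s : 'S_n) :
  (perm_mx s : 'M[C]_n)^t* = perm_mx s^-1.
Proof. by rewrite -map_trmx map_perm_mx tr_perm_mx. Qed.

Lemma perm_mx_unitary (C : numClosedFieldType) n (s : 'S_n) :
  (perm_mx s : 'M[C]_n) \is unitarymx.
Proof. by apply/unitarymxP; rewrite perm_mx_trC -perm_mxM mulgV perm_mx1. Qed.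

Lemma perm_mx_conj_diag (C : numClosedFieldType) n (s : 'S_n) (d : 'I_n -> C) :
  perm_mx s *m diag_mx (\row_i d i) *m (perm_mx s)^t* = diag_mx (\row_i d (s i)).
Proof.
rewrite perm_mx_trC -row_permE -col_permE; apply/matrixP => i j; rewrite !mxE.
by rewrite (inj_eq perm_inj).
Qed.

Section BlockProjections.
Variables (C : numClosedFieldType) (ns : seq nat) (n : nat).
Implicit Types A X : 'M[C]_n.

Definition block_diagonal A := forall i j : 'I_n, blk ns i != blk ns j -> A i j = 0.

Definition blkproj (t : nat) : 'M[C]_n := diag_mx (\row_i (blk ns i == t)%:R).

Definition block_part a b X := blkproj a *m X *m blkproj b.

Definition block_triple X :=
  \tr (block_part 0 1 X *m block_part 1 2 X *m block_part 2 0 X).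

Lemma block_diagonal_trC A : block_diagonal A -> block_diagonal (A^t*).
Proof. by move=> Ablk i j ij; rewrite !mxE Ablk ?conjC0 // eq_sym. Qed.

Lemma blkproj_comm t A : block_diagonal A -> blkproj t *m A = A *m blkproj t.
Proof.
move=> Ablk; apply/matrixP => i j; rewrite mul_diag_mx mul_mx_diag !mxE.
have [->|ne] := eqVneq (blk ns i) (blk ns j); first by rewrite mulrC.
by rewrite Ablk // mulr0 mul0r.
Qed.

Lemma blkproj_conj t : blkproj t ^ Num.conj = blkproj t.
Proof. by apply/matrixP => i j; rewrite !mxE rmorphMn rmorph_nat. Qed.

Lemma blkproj_real t : blkproj t \is a realmx.
Proof. by apply: mxOver_diag => //; apply/mxOverP => i j; rewrite mxE realn. Qed.

Lemma block_triple_conj A X : A \is unitarymx -> block_diagonal A ->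
  block_triple (A *m X *m A^t*) = block_triple X.
Proof.
move=> AU Ablk.
have partE a b : block_part a b (A *m X *m A^t*) = A *m block_part a b X *m A^t*.
  rewrite /block_part !mulmxA (blkproj_comm a Ablk) -!mulmxA.
  by rewrite -(blkproj_comm b (block_diagonal_trC Ablk)) !mulmxA.
have telescope Y Z : A *m Y *m A^t* *m (A *m Z *m A^t*) = A *m (Y *m Z) *m A^t*.
  by rewrite !mulmxA (mulmxKtV _ AU).
by rewrite /block_triple !partE !telescope -mulmxA mxtrace_mulC (mulmxKtV _ AU).
Qed.

Lemma block_triple_real X : X \is a realmx -> block_triple X \is Num.real.
Proof.
move=> Xreal; apply/CrealP.
by rewrite -trace_map_mx /block_part !map_mxM (realmxC Xreal) !blkproj_conj.
Qed.
End BlockProjections.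

Lemma block_triple_double_coset_real (C : numClosedFieldType) (ns pq : seq nat) n t
    (l o h : 'M[C]_n) :
  l \is unitarymx -> block_diagonal ns l -> o \is a realmx ->
  h \is unitarymx -> block_diagonal pq h ->
  block_triple ns (l *m o *m h *m blkproj C pq n t *m (l *m o *m h)^t*)
    \is Num.real.
Proof.
move=> lU lblk oreal hU hblk.
have otr : o^t* = o^T by rewrite -map_trmx (realmxC oreal).
have -> : l *m o *m h *m blkproj C pq n t *m (l *m o *m h)^t*
          = l *m (o *m blkproj C pq n t *m o^T) *m l^t*.
  rewrite !trmxC_mul otr -!mulmxA (mulmxA h) -(blkproj_comm t hblk) -mulmxA.
  by rewrite (mulmxA h) (unitarymxP hU) mul1mx !mulmxA.
rewrite block_triple_conj //; apply: block_triple_real.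
rewrite !mxOverM ?blkproj_real //.
by apply/mxOverP => i j; rewrite mxE (mxOverP oreal).
Qed.

Section Embedding.
Variables (C : numClosedFieldType) (m n : nat) (sel : 'I_m -> 'I_n).
Hypothesis sel_inj : injective sel.

Definition selmx : 'M[C]_(m, n) := rowsub sel 1%:M.

Lemma selmx_conj : selmx ^ Num.conj = selmx.
Proof. by apply/matrixP => i j; rewrite !mxE rmorph_nat. Qed.

Lemma mul_selmx_tr : selmx *m selmx^T = 1%:M.
Proof.
rewrite trmx_mxsub trmx1 mulmx_colsub mulmx1.
by apply/matrixP => i j; rewrite !mxE (inj_eq sel_inj).
Qed.

Lemma diag_mx_selmx_tr (d : 'I_n -> C) :
  diag_mx (\row_i d i) *m selmx^T = selmx^T *m diag_mx (\row_r d (sel r)).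
Proof.
apply/matrixP => i r; rewrite mul_diag_mx mul_mx_diag !mxE.
by have [->|] := eqVneq i (sel r); rewrite ?mulr1 ?mul1r ?mulr0 ?mul0r.
Qed.

Lemma selmx_diag_mx (d : 'I_n -> C) :
  selmx *m diag_mx (\row_i d i) = diag_mx (\row_r d (sel r)) *m selmx.
Proof. by apply: trmx_inj; rewrite !trmx_mul !tr_diag_mx diag_mx_selmx_tr. Qed.

Definition embedmx (U : 'M[C]_m) : 'M[C]_n := 1%:M + selmx^T *m (U - 1%:M) *m selmx.

Lemma embedmx_trC U : (embedmx U)^t* = embedmx (U^t*).
Proof.
rewrite /embedmx raddfD /= map_mxD trmx1 map_mx1 !trmxC_mul trmxK.
rewrite -[selmx^t*]map_trmx selmx_conj raddfB /= map_mxB trmx1 map_mx1.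
by rewrite mulmxA.
Qed.

Lemma embedmx_conj_diag U (d : 'I_n -> C) :
  embedmx U *m diag_mx (\row_i d i) *m (embedmx U)^t* =
  diag_mx (\row_i d i) + selmx^T *m
    (U *m diag_mx (\row_r d (sel r)) *m U^t* - diag_mx (\row_r d (sel r))) *m selmx.
Proof.
have DF := diag_mx_selmx_tr d; have ED := selmx_diag_mx d; have EF := mul_selmx_tr.
rewrite embedmx_trC /embedmx.
move: DF ED EF; set D := diag_mx _; set D' := diag_mx _; set E := selmx => DF ED EF.
have -> : U *m D' *m U^t* - D' =
    (U - 1%:M) *m D' + D' *m (U^t* - 1%:M) + (U - 1%:M) *m D' *m (U^t* - 1%:M).
  rewrite !mulmxBl !mulmxBr !mul1mx !mulmx1.
  by rewrite -addrA [D' *m U^t* - D' + _]addrC subrK addrC addrA subrK.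
have EDl k (X : 'M_(k, m)) : X *m E *m D = X *m D' *m E by rewrite -!mulmxA ED.
have EFl k (X : 'M_(k, m)) : X *m E *m E^T = X by rewrite -mulmxA EF mulmx1.
set W := U - 1%:M; set W' := U^t* - 1%:M.
rewrite !(mulmxDl, mulmxDr) !mul1mx !mulmx1 !mulmxA DF !EDl !EFl.
by rewrite !addrA [D + _ + _]addrAC.
Qed.

Lemma embedmx_unitary U : U \is unitarymx -> embedmx U \is unitarymx.
Proof.
move=> /unitarymxP UU; apply/unitarymxP.
have diag1 k : diag_mx (\row_(i < k) (1 : C)) = 1%:M.
  by apply/matrixP => i j; rewrite !mxE.
have := embedmx_conj_diag U (fun=> 1).
by rewrite !diag1 !mulmx1 UU subrr mulmx0 mul0mx addr0.
Qed.

End Embedding.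

Lemma delta_mx_sandwich (C : pzSemiRingType) m n (A : 'M[C]_(m, n)) i j :
  delta_mx i i *m A *m delta_mx j j = A i j *: delta_mx i j.
Proof.
apply/matrixP => k l; rewrite !mxE (bigD1 j) //= big1 => [|x /negbTE xj].
  rewrite [delta_mx j j j l]mxE eqxx [(_ *m A) k j]mxE (bigD1 i) //= big1.
    rewrite [delta_mx i i k i]mxE eqxx andbT !addr0.
    by rewrite mulr_natl !mulr_natr -mulrnA mulnb.
  by move=> y /negbTE yi; rewrite [delta_mx i i k y]mxE yi andbF mul0r.
by rewrite [delta_mx j j x l]mxE xj mulr0.
Qed.

Lemma mxtrace_delta (C : pzSemiRingType) n (i : 'I_n) :
  \tr (delta_mx i i : 'M[C]_n) = 1.
Proof.
rewrite /mxtrace (bigD1 i) //= big1 => [|j /negbTE ji]; last by rewrite mxE ji.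
by rewrite mxE !eqxx addr0.
Qed.

Section EmbeddedTriple.
Variables (C : numClosedFieldType) (ns : seq nat) (n : nat) (sel : 'I_4 -> 'I_n).
Hypothesis sel_inj : injective sel.
Hypothesis blk_sel : forall r, blk ns (sel r) = r.

Let E := selmx C sel.

Lemma blkproj_selmx_tr (a : 'I_4) : blkproj C ns n a *m E^T = E^T *m delta_mx a a.
Proof.
rewrite diag_mx_selmx_tr; congr (_ *m _).
apply/matrixP => i j; rewrite !mxE blk_sel.
have [->|ij] := eqVneq i j; first by rewrite andbb mulr1n.
rewrite mulr0n; case: eqP => // ia; case: eqP => // ja.
by case/eqP: ij; apply: val_inj; rewrite /= ia ja.
Qed.

Lemma selmx_blkproj (b : 'I_4) : E *m blkproj C ns n b = delta_mx b b *m E.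
Proof.
by apply: trmx_inj; rewrite !trmx_mul tr_diag_mx trmx_delta blkproj_selmx_tr.
Qed.

Lemma blkproj_diag_blkproj (a b : nat) (d : 'I_n -> C) : a != b ->
  blkproj C ns n a *m diag_mx (\row_i d i) *m blkproj C ns n b = 0.
Proof.
move=> ab; apply/matrixP => i j; rewrite mul_mx_diag mul_diag_mx !mxE.
have [<-|_] := eqVneq i j; last by rewrite mulr0n mulr0 mul0r.
have [->|_] := eqVneq (blk ns i) a; last by rewrite !mul0r.
by rewrite (negbTE ab) mulr0.
Qed.

Lemma block_part_embedded (a b : 'I_4) (d : 'I_n -> C) Y : a != b ->
  block_part ns a b (diag_mx (\row_i d i) + E^T *m Y *m E) =
  E^T *m (Y a b *: delta_mx a b) *m E.
Proof.
move=> ab; rewrite /block_part mulmxDr mulmxDl blkproj_diag_blkproj // add0r.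
rewrite -delta_mx_sandwich !mulmxA blkproj_selmx_tr -!mulmxA.
by rewrite selmx_blkproj !mulmxA.
Qed.

Lemma block_triple_embedded (d : 'I_n -> C) Y :
  block_triple ns (diag_mx (\row_i d i) + E^T *m Y *m E) = Y 0 1 * Y 1 2 * Y 2 0.
Proof.
have EF : E *m E^T = 1%:M := mul_selmx_tr C sel_inj.
have telescope X Z : E^T *m X *m E *m (E^T *m Z *m E) = E^T *m (X *m Z) *m E.
  by rewrite -!mulmxA (mulmxA E) EF mul1mx.
rewrite /block_triple (@block_part_embedded 0 1) // (@block_part_embedded 1 2) //.
rewrite (@block_part_embedded 2 0) // !telescope -mulmxA mxtrace_mulC.
rewrite -[_ *m E *m E^T]mulmxA EF mulmx1.
rewrite -!(scalemxAl, scalemxAr) !mul_delta_mx !scalerA mxtraceZ mxtrace_delta.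
by rewrite mulr1 mulrA mulrAC.
Qed.
End EmbeddedTriple.

Section Witness.
Local Open Scope complex_scope.
Local Notation R := Rdefinitions.R.

Let complexD (a b c d : R) : (a +i* b) + (c +i* d) = (a + c) +i* (b + d) :> CC.
Proof. by []. Qed.
Let complexM (a b c d : R) :
  (a +i* b) * (c +i* d) = (a * c - b * d) +i* (a * d + b * c) :> CC.
Proof. by []. Qed.
Let complexJ (a b : R) : Num.conj (a +i* b) = a +i* (- b) :> CC.
Proof. by []. Qed.

(* witness = 1/2 [[0, 1, 1, 1-i]; [1, 1, i, -1]; [1, -i, -1, 1]; [1+i, -1, 1, 0]] *)
Definition witness_entry (i j : nat) : CC :=
  let h : R := 1 / 2 in
  match i, j with
  | 0, 1 | 0, 2 | 1, 0 | 1, 1 | 2, 0 | 2, 3 | 3, 2 => h +i* 0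
  | 1, 3 | 2, 2 | 3, 1 => (- h) +i* 0
  | 1, 2 => 0 +i* h
  | 2, 1 => 0 +i* (- h)
  | 0, 3 => h +i* (- h)
  | 3, 0 => h +i* h
  | _, _ => 0 +i* 0
  end.

Definition witness : 'M[CC]_4 := \matrix_(i, j) witness_entry i j.

Lemma witness_unitary : witness \is unitarymx.
Proof.
apply/unitarymxP/matrixP => i j; rewrite !mxE !big_ord_recr big_ord0 /= !mxE.
case: i => [[|[|[|[|i]]]] ?] //; case: j => [[|[|[|[|j]]]] ?] //=.
all: rewrite ?mulr1n ?mulr0n ?complexJ ?complexM ?complexD /=.
all: by apply/eqP; rewrite eq_complex /=; apply/andP; split; apply/eqP; field.
Qed.

Definition witness_diag : 'M[CC]_4 := diag_mx (\row_(r < 4) ((r < 2)%N)%:R).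

Definition witness_proj : 'M[CC]_4 := witness *m witness_diag *m witness^t*.

Let witness_projE i j :
  witness_proj i j = witness i 0 * witness^t* 0 j + witness i 1 * witness^t* 1 j.
Proof.
rewrite /witness_proj /witness_diag mul_mx_diag mxE.
rewrite !big_ord_recr big_ord0 /= !mxE /= mulr1n !mulr0n.
by rewrite !mulr1 !mulr0 !mul0r !addr0 add0r.
Qed.

Lemma witness_triple_nonreal (Y := witness_proj - witness_diag) :
  Y 0 1 * Y 1 2 * Y 2 0 \notin Num.real.
Proof.
have offdiag a b : a != b -> Y a b = witness_proj a b.
  by move=> ab; rewrite !mxE (negbTE ab) mulr0n subr0.
rewrite !offdiag //.
have -> : witness_proj 0 1 = (1 / 4) +i* 0.
  rewrite witness_projE !mxE /= !complexJ !complexM !complexD.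
  by congr (_ +i* _); field.
have -> : witness_proj 1 2 = (1 / 4) +i* (1 / 4).
  rewrite witness_projE !mxE /= !complexJ !complexM !complexD.
  by congr (_ +i* _); field.
have -> : witness_proj 2 0 = 0 +i* (- 1 / 4).
  rewrite witness_projE !mxE /= !complexJ !complexM !complexD.
  by congr (_ +i* _); field.
rewrite !complexM; apply/negP => /CrealP; rewrite complexJ => /eqP.
by rewrite eq_complex /= => /andP[_ /eqP]; lra.
Qed.
End Witness.

Lemma perm_of_uniq (T : finType) (xs ys : seq T) :
  uniq xs -> uniq ys -> size xs = size ys -> exists s : {perm T}, map s xs = ys.
Proof.
elim: xs ys => [|x xs IH] [|y ys] //=; first by exists 1%g.
move=> /andP[xNxs xsU] /andP[yNys ysU] [sz].
have [s sxs] := IH ys xsU ysU sz.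
exists (s * tperm (s x) y)%g; rewrite permM tpermL; congr (_ :: _).
rewrite -[RHS]sxs; apply/eq_in_map => z zxs; rewrite permM tpermD //.
  by rewrite (inj_eq perm_inj); apply: contraNneq xNxs => ->.
by apply: contraNneq yNys => ->; rewrite -sxs map_f.
Qed.

Lemma perm_of_injective (T : finType) k (f g : 'I_k -> T) :
  injective f -> injective g -> exists s : {perm T}, forall i, s (f i) = g i.
Proof.
move=> f_inj g_inj.
have [s sfg] : exists s : {perm T}, map s (map f (enum 'I_k)) = map g (enum 'I_k).
  apply: perm_of_uniq; last by rewrite !size_map.
    by rewrite (map_inj_uniq f_inj) enum_uniq.
  by rewrite (map_inj_uniq g_inj) enum_uniq.
exists s => i; move: sfg; rewrite -map_comp => /eq_in_map/(_ i); apply.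
by rewrite mem_enum.
Qed.

Lemma perm_separate n p k j (x : 'I_k -> 'I_n) : injective x ->
  (j <= p)%N -> (p + (k - j) <= n)%N ->
  exists s : {perm 'I_n}, forall r, (s (x r) < p)%N = (r < j)%N.
Proof.
move=> x_inj jp pn.
have tgt_lt (r : 'I_k) : ((if r < j then r : nat else p + (r - j)) < n)%N.
  by have := ltn_ord r; case: ifP; lia.
pose tgt r : 'I_n := Ordinal (tgt_lt r).
have tgt_inj : injective tgt.
  by move=> r r' [] /=; case: ifP; case: ifP => *; apply: val_inj => /=; lia.
have [s sxt] := perm_of_injective x_inj tgt_inj.
by exists s => r; rewrite sxt /=; case: ifP => rj; lia.
Qed.

Section BlockIndex.
Local Open Scope nat_scope.
Variable ns : seq nat.
Hypothesis ns_pos : all (fun m => 0 < m) ns.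

Lemma sumn_take_lt r : r < size ns -> sumn (take r ns) < sumn ns.
Proof.
elim: ns ns_pos r => [|m ms IH] //= /andP[m_pos ms_pos] [|r] /=; first by lia.
by move=> /(IH ms_pos); lia.
Qed.

Lemma blk_sumn_take r : r < size ns -> blk ns (sumn (take r ns)) = r.
Proof.
elim: ns ns_pos r => [|m ms IH] //= /andP[m_pos ms_pos] [|r] /=.
  by rewrite m_pos.
by move=> /(IH ms_pos) IHr; rewrite ifN ?addKn ?IHr //; lia.
Qed.

Lemma block_representatives k : k <= size ns ->
  exists sel : 'I_k -> 'I_(sumn ns), injective sel /\ forall r, blk ns (sel r) = r.
Proof.
move=> k_le; have r_lt (r : 'I_k) : r < size ns by apply: leq_trans k_le.
have sel_lt (r : 'I_k) : sumn (take r ns) < sumn ns by rewrite sumn_take_lt.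
exists (fun r => Ordinal (sel_lt r)); split=> [r r' [] /(congr1 (blk ns))|r /=].
  by rewrite !blk_sumn_take // => /val_inj.
by rewrite blk_sumn_take.
Qed.
End BlockIndex.

Unset Implicit Arguments.

Theorem proposition6p7 (n p q : nat) (ns : seq nat) :
  all (fun m => 0 < m)%N ns -> sumn ns = n ->
  (0 < p)%N -> (0 < q)%N -> (p + q)%N = n ->
  (3 <= minn p q)%N -> (4 <= size ns)%N ->
  (* L G' H is contained in G ... *)
  (forall l o h : 'M[CC]_n,
      block_unitary ns l -> orthogonal_mx o -> block_unitary [:: p; q] h ->
      unitary_mx (l *m o *m h)) /\
  (* ... and properly: some g in G is not of the form l o h *)
  (exists g : 'M[CC]_n, unitary_mx g /\
     ~ (exists l o h : 'M[CC]_n,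
          [/\ block_unitary ns l, orthogonal_mx o, block_unitary [:: p; q] h
            & g = l *m o *m h])).
Proof.
move=> ns_pos <- _ _ pqn minpq size_ns.
split=> [l o h [/unitary_mxE lU _] [/unitary_mxE oU _] [/unitary_mxE hU _]|].
  by apply/unitary_mxE; exact: mul_unitarymx (mul_unitarymx lU oU) hU.
have [sel [sel_inj blk_sel]] := block_representatives ns_pos size_ns.
have [s sP] := @perm_separate _ p _ 2 sel sel_inj ltac:(lia) ltac:(lia).
pose g := embedmx sel witness *m perm_mx s.
exists g; split.
  apply/unitary_mxE/mul_unitarymx; last exact: perm_mx_unitary.
  apply: (embedmx_unitary sel_inj); exact: witness_unitary.
case=> [l [o [h [[/unitary_mxE lU lblk] /realmx_orthogonal oR
                 [/unitary_mxE hU hblk] gE]]]].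
have := block_triple_double_coset_real 0 lU lblk oR hU hblk; rewrite -gE.
rewrite trmxC_mul -!mulmxA (mulmxA (perm_mx s)) (mulmxA (perm_mx s *m _)).
rewrite perm_mx_conj_diag !mulmxA embedmx_conj_diag //.
have -> : \row_r (blk [:: p; q] (s (sel r)) == 0)%:R =
          \row_(r < 4) ((r < 2)%N)%:R :> 'rV[CC]_4.
  by apply/rowP => r; rewrite !mxE -sP /=; case: ifP.
rewrite -/witness_diag -/witness_proj (block_triple_embedded sel_inj blk_sel).
by rewrite (negbTE witness_triple_nonreal).
Qed.
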